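(* Consider the system $x_{t+1} = A_t x_t + B_t u_t + w_t$ over horizon $T$ with stacked vectors $\mathbf{x} = (x_0,\dots,x_{T-1})$, $\mathbf{u} = (u_0,\dots,u_{T-1})$, $\mathbf{w} = (x_0,w_0,\dots,w_{T-2})$, so that $\mathbf{x} = \mathbf{F}\mathbf{u} + \mathbf{G}\mathbf{w}$ with $\mathbf{F} = (\mathbf{I}-\mathbf{Z}\mathbf{A})^{-1}\mathbf{Z}\mathbf{B}$, $\mathbf{G} = (\mathbf{I}-\mathbf{Z}\mathbf{A})^{-1}$. Let $\mathbf{Q}\succeq 0$, $\mathbf{R}\succ 0$, $J(\bm{\pi},\mathbf{w}) = \mathbf{x}^\top\mathbf{Q}\mathbf{x} + \mathbf{u}^\top\mathbf{R}\mathbf{u}$, and let $\bm{\psi}^\star$ be the unconstrained clairvoyant optimal policy, $\mathbf{u}_{\psi^\star} = -(\mathbf{R}+\mathbf{F}^\top\mathbf{Q}\mathbf{F})^{-1}\mathbf{F}^\top\mathbf{Q}\mathbf{G}\mathbf{w}$, $\mathbf{x}_{\psi^\star} = \mathbf{F}\mathbf{u}_{\psi^\star}+\mathbf{G}\mathbf{w}$. Assume $\mathbf{w}$ is random with distribution $\mathcal{D}$ having mean $\bm{\mu}_\mathbf{w}$ and covariance $\Sigma_\mathbf{w}\succeq 0$. Then, over linear control policies $\bm{\pi}$ (causal linear state feedback $\mathbf{u}=\mathbf{K}\mathbf{x}$ with $\mathbf{K}$ block lower-triangular), the set of minimizers of $$\mathbb{E}\big[(\mathbf{x}-\mathbf{x}_{\psi^\star})^\top\mathbf{Q}(\mathbf{x}-\mathbf{x}_{\psi^\star})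 + (\mathbf{u}-\mathbf{u}_{\psi^\star})^\top\mathbf{R}(\mathbf{u}-\mathbf{u}_{\psi^\star})\big]$$ coincides with $\operatorname{argmin}_{\bm{\pi}} \mathbb{E}[J(\bm{\pi},\mathbf{w})]$.
   Context: $\mathbf{Z}$ is the block-downshift matrix (identity blocks on the first block sub-diagonal, zeros elsewhere), $\mathbf{A} = \operatorname{blkdiag}(A_0,\dots,A_{T-2},0_{n\times n})$, $\mathbf{B} = \operatorname{blkdiag}(B_0,\dots,B_{T-2},0_{n\times m})$. $\mathbf{x},\mathbf{u}$ denote the closed-loop trajectories under $\bm{\pi}$ driven by $\mathbf{w}$; expectations are with respect to $\mathbf{w}\sim\mathcal{D}$. *)

From HB Require Import structures.
From mathcomp Require Import all_boot all_order all_algebra.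
From mathcomp Require Import all_classical all_reals all_analysis.
Set Implicit Arguments. Unset Strict Implicit. Unset Printing Implicit Defensive.
Import Order.TTheory GRing.Theory Num.Theory.
Local Open Scope ring_scope.

Section FiniteHorizonLQ.
Variables (R : realType) (T n m : nat).
(* stacked dimensions: state/disturbance space R^{nT}, input space R^{mT},
   each organised in T blocks (one per time step) *)
Local Notation NX := (\sum_(t < T) n)%N.
Local Notation NU := (\sum_(t < T) m)%N.

Variables (As : nat -> 'M[R]_n) (Bs : nat -> 'M[R]_(n, m)).

Definition Zmx : 'M[R]_NX :=
  \mxblock_(i < T, j < T) (if i == j.+1 :> nat then 1%:M else 0 : 'M[R]_(n, n)).

Definition Amx : 'M[R]_NX :=
  \mxblock_(i < T, j < T)
    (if (i == j) && (i < T.-1)%N then As i else 0 : 'M[R]_(n, n)).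

Definition Bmx : 'M[R]_(NX, NU) :=
  \mxblock_(i < T, j < T)
    (if (i == j) && (i < T.-1)%N then Bs i else 0 : 'M[R]_(n, m)).

Definition Gmx : 'M[R]_NX := invmx (1%:M - Zmx *m Amx).
Definition Fmx : 'M[R]_(NX, NU) := Gmx *m Zmx *m Bmx.

Definition causal (K : 'M[R]_(NU, NX)) : Prop :=
  forall i j : 'I_T, (i < j)%N ->
    @submxblock R T T (fun _ => m) (fun _ => n) K i j = 0.

(* closed-loop trajectories of u = K x, x = F u + G w *)
Definition xcl (K : 'M[R]_(NU, NX)) (w : 'cV[R]_NX) : 'cV[R]_NX :=
  invmx (1%:M - Fmx *m K) *m Gmx *m w.
Definition ucl (K : 'M[R]_(NU, NX)) (w : 'cV[R]_NX) : 'cV[R]_NU :=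
  K *m xcl K w.

Definition quad k (M : 'M[R]_k) (v : 'cV[R]_k) : R := (v^T *m M *m v) 0 0.

Definition ustar (Q : 'M[R]_NX) (Rc : 'M[R]_NU) (w : 'cV[R]_NX) : 'cV[R]_NU :=
  - (invmx (Rc + Fmx^T *m Q *m Fmx) *m Fmx^T *m Q *m Gmx *m w).
Definition xstar (Q : 'M[R]_NX) (Rc : 'M[R]_NU) (w : 'cV[R]_NX) : 'cV[R]_NX :=
  Fmx *m ustar Q Rc w + Gmx *m w.

Definition Jcost (Q : 'M[R]_NX) (Rc : 'M[R]_NU) K w : R :=
  quad Q (xcl K w) + quad Rc (ucl K w).

Definition Dcost (Q : 'M[R]_NX) (Rc : 'M[R]_NU) K w : R :=
  quad Q (xcl K w - xstar Q Rc w) + quad Rc (ucl K w - ustar Q Rc w).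

Definition argmin_causal (f : 'M[R]_(NU, NX) -> \bar R) : set 'M[R]_(NU, NX) :=
  [set K | causal K /\ forall K', causal K' -> (f K <= f K')%E].

End FiniteHorizonLQ.

Definition psd (R : realType) k (M : 'M[R]_k) : Prop :=
  M^T = M /\ forall v : 'cV[R]_k, 0 <= quad M v.
Definition pd (R : realType) k (M : 'M[R]_k) : Prop :=
  M^T = M /\ forall v : 'cV[R]_k, v != 0 -> 0 < quad M v.

From HB Require Import structures.
From mathcomp Require Import all_boot all_order all_algebra.
From mathcomp Require Import all_classical all_reals all_analysis measurable_realfun.
From mathcomp Require Import zify lra.
Set Implicit Arguments. Unset Strict Implicit. Unset Printing Implicit Defensive.
Import Order.TTheory GRing.Theory Num.Theory.
Local Open Scope ring_scope.

(* Along a causal closed loop the trajectory satisfies x = F u + G w, and J is a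
   quadratic function of u whose stationary point, for each w, is the clairvoyant
   input u_psi*.  Expanding J around that point, the cross term vanishes by the
   normal equation, so J(K, w) = D(K, w) + J(psi*, w) with a last term that does
   not depend on K.  Since w has second moments its expectation is finite, so the
   two expected costs differ by a finite constant on causal gains and have the
   same minimizers.  Causality is needed only to invert I - F K: F is strictly
   block lower triangular, hence so is F K, which is therefore nilpotent. *)

Section Nilpotent.
Variables (R : comUnitRingType) (k : nat) (N : 'M[R]_k) (p : nat).
Hypothesis Np0 : N ^+ p = 0.

Lemma mulmx_1_sub_geom : (1%:M - N) *m (\sum_(i < p) N ^+ i) = 1%:M.
Proof. by rewrite mulmxE idmxE -opprB mulNr -subrX1 Np0 sub0r opprK. Qed.

Lemma unitmx_1_sub_nilpotent : (1%:M - N) \in unitmx.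
Proof. exact: (mulmx1_unit mulmx_1_sub_geom).1. Qed.

Lemma invmx_1_sub_nilpotent : invmx (1%:M - N) = \sum_(i < p) N ^+ i.
Proof.
by rewrite -[RHS](mulKmx unitmx_1_sub_nilpotent) mulmx_1_sub_geom mulmx1.
Qed.

End Nilpotent.

Section BlockLower.
Variables (R : pzRingType) (T : nat).

Definition block_lower (p_ q_ : 'I_T -> nat) (s : nat)
    (M : 'M[R]_(\sum_i p_ i, \sum_i q_ i)) :=
  forall i j : 'I_T, (i < j + s)%N -> submxblock M i j = 0.

Arguments block_lower {p_ q_}.

Lemma block_lower_mul (p_ q_ r_ : 'I_T -> nat) s1 s2
    (A : 'M[R]_(\sum_i p_ i, \sum_i q_ i)) (B : 'M[R]_(\sum_i q_ i, \sum_i r_ i)) :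
  block_lower s1 A -> block_lower s2 B -> block_lower (s1 + s2) (A *m B).
Proof.
move=> lowA lowB i k lt_ik.
rewrite -(submxblockK A) -(submxblockK B) mul_mxblock mxblockK.
apply: big1 => j _; have [lt_ij|le_ji] := ltnP i (j + s1).
  by rewrite lowA // mul0mx.
by rewrite (lowB j k) ?mulmx0 //; lia.
Qed.

Lemma block_lowerW (p_ q_ : 'I_T -> nat) s s'
    (M : 'M[R]_(\sum_i p_ i, \sum_i q_ i)) :
  (s' <= s)%N -> block_lower s M -> block_lower s' M.
Proof. by move=> le_s'_s lowM i j lt_ij; apply: lowM; lia. Qed.

Lemma block_lower_sum (p_ q_ : 'I_T -> nat) s I (r : seq I) (P : pred I)
    (F : I -> 'M[R]_(\sum_i p_ i, \sum_i q_ i)) :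
  (forall l, P l -> block_lower s (F l)) ->
  block_lower s (\sum_(l <- r | P l) F l).
Proof.
move=> lowF; apply: big_ind => //.
- by move=> i j _; rewrite submxblock0.
- by move=> A B lowA lowB i j lt_ij; rewrite submxblockD lowA ?lowB ?addr0.
Qed.

Lemma block_lower1 (p_ : 'I_T -> nat) :
  block_lower 0 (1%:M : 'M[R]_(\sum_i p_ i)).
Proof.
move=> i j; rewrite addn0 => lt_ij; apply/matrixP => a b.
rewrite !mxE; case: eqP => // /(congr1 (@tagnat.sig1 _ p_)).
by rewrite !tagnat.Rank1K => eq_ij; move: lt_ij; rewrite eq_ij ltnn.
Qed.

Lemma block_lower_eq0 (p_ q_ : 'I_T -> nat) s
    (M : 'M[R]_(\sum_i p_ i, \sum_i q_ i)) :
  (T <= s)%N -> block_lower s M -> M = 0.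
Proof.
move=> le_T_s lowM; apply/mxblockP => i j; rewrite submxblock0 lowM //.
by have := ltn_ord i; lia.
Qed.

Lemma block_lowerX (p_ : 'I_T -> nat) s (N : 'M[R]_(\sum_i p_ i)) j :
  block_lower s N -> block_lower (s * j) (N ^+ j).
Proof.
move=> lowN; elim: j => [|j IHj].
  by rewrite muln0 expr0; exact: block_lower1.
by rewrite exprS mulnS; exact: block_lower_mul.
Qed.

Lemma block_lower_nilpotent (p_ : 'I_T -> nat) (N : 'M[R]_(\sum_i p_ i)) :
  block_lower 1 N -> N ^+ T = 0.
Proof.
move=> lowN; apply: (@block_lower_eq0 _ _ (1 * T)%N); first by rewrite mul1n.
exact: block_lowerX.
Qed.

End BlockLower.

Arguments block_lower {R T p_ q_}.

Lemma unitmx_1_sub_block_lower (R : comUnitRingType) T (p_ : 'I_T -> nat)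
    (N : 'M[R]_(\sum_i p_ i)) :
  block_lower 1 N -> (1%:M - N) \in unitmx.
Proof. by move/block_lower_nilpotent/unitmx_1_sub_nilpotent. Qed.

Lemma block_lower_invmx_1_sub (R : comUnitRingType) T (p_ : 'I_T -> nat)
    (N : 'M[R]_(\sum_i p_ i)) :
  block_lower 1 N -> block_lower 0 (invmx (1%:M - N)).
Proof.
move=> lowN; rewrite (invmx_1_sub_nilpotent (block_lower_nilpotent lowN)).
apply: block_lower_sum => j _; apply: (@block_lowerW _ _ _ _ (1 * j)%N) => //.
exact: block_lowerX.
Qed.

Section ClosedLoop.
Variables (R : realType) (T n m : nat).
Variables (As : nat -> 'M[R]_n) (Bs : nat -> 'M[R]_(n, m)).
Local Notation F := (Fmx T As Bs).
Local Notation G := (Gmx T As).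

Lemma Zmx_block_lower : block_lower 1 (Zmx R T n).
Proof.
move=> i j lt_ij; rewrite /Zmx mxblockK.
by case: eqP => // eq_ij; move: lt_ij; rewrite eq_ij addn1 ltnn.
Qed.

Lemma Amx_block_lower : block_lower 0 (Amx T As).
Proof.
move=> i j lt_ij; rewrite /Amx mxblockK.
by case: eqP => //= eq_ij; move: lt_ij; rewrite eq_ij addn0 ltnn.
Qed.

Lemma Bmx_block_lower : block_lower 0 (Bmx T Bs).
Proof.
move=> i j lt_ij; rewrite /Bmx mxblockK.
by case: eqP => //= eq_ij; move: lt_ij; rewrite eq_ij addn0 ltnn.
Qed.

Lemma Gmx_block_lower : block_lower 0 G.
Proof.
apply: block_lower_invmx_1_sub; rewrite -[1%N]addn0.
exact: block_lower_mul Zmx_block_lower Amx_block_lower.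
Qed.

Lemma Fmx_block_lower : block_lower 1 F.
Proof.
rewrite /Fmx -[1%N]/(0 + 1 + 0)%N.
apply: block_lower_mul Bmx_block_lower.
exact: block_lower_mul Gmx_block_lower Zmx_block_lower.
Qed.

Lemma unitmx_closed_loop K : causal K -> (1%:M - F *m K) \in unitmx.
Proof.
move=> causalK; apply: unitmx_1_sub_block_lower; rewrite -[1%N]addn0.
by apply: block_lower_mul Fmx_block_lower _ => i j; rewrite addn0; apply: causalK.
Qed.

Lemma xcl_dynamics K w : causal K -> xcl As Bs K w = F *m ucl As Bs K w + G *m w.
Proof.
move=> /unitmx_closed_loop unitFK.
have : (1%:M - F *m K) *m xcl As Bs K w = G *m w.
  by rewrite /xcl !mulmxA mulmxV // mul1mx.
by rewrite mulmxBl mul1mx => <-; rewrite /ucl mulmxA addrC subrK.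
Qed.

End ClosedLoop.

Section QuadraticCost.
Variable R : realType.

Lemma quadD k (Q : 'M[R]_k) (x y : 'cV[R]_k) : Q^T = Q ->
  quad Q (x + y) = quad Q x + quad Q y + 2 * (x^T *m Q *m y) 0 0.
Proof.
move=> symQ; rewrite /quad [(x + y)^T]linearD /= !mulmxDl !mulmxDr.
have -> : y^T *m Q *m x = (x^T *m Q *m y)^T.
  by rewrite !trmx_mul trmxK symQ mulmxA.
rewrite !mxE; lra.
Qed.

Lemma unitmx_pd_add_psd k l (F : 'M[R]_(k, l)) (Q : 'M[R]_k) (Rc : 'M[R]_l) :
  psd Q -> pd Rc -> (Rc + F^T *m Q *m F) \in unitmx.
Proof.
move=> [_ Q_ge0] [_ Rc_gt0]; rewrite unitmxE unitfE.
apply/negP => /det0P [v v_neq0 Hv0].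
have : (v *m Rc *m v^T + (F *m v^T)^T *m Q *m (F *m v^T)) 0 0 = 0.
  have -> : v *m Rc *m v^T + (F *m v^T)^T *m Q *m (F *m v^T) =
      v *m (Rc + F^T *m Q *m F) *m v^T.
    by rewrite trmx_mul trmxK mulmxDr mulmxDl !mulmxA.
  by rewrite Hv0 mul0mx mxE.
rewrite mxE -[v in v *m Rc]trmxK -/(quad _ _) -/(quad _ _).
have := Q_ge0 (F *m v^T); have := Rc_gt0 v^T; rewrite trmx_eq0 => /(_ v_neq0).
lra.
Qed.

(* The normal equation for [us] is exactly what kills the cross term of the
   expansion of the cost around [us]. *)
Lemma quad_cost_split k l (F : 'M[R]_(k, l)) (Q : 'M[R]_k) (Rc : 'M[R]_l)
    (g : 'cV[R]_k) (us u : 'cV[R]_l) :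
  Q^T = Q -> Rc^T = Rc -> (Rc + F^T *m Q *m F) *m us = - (F^T *m Q *m g) ->
  quad Q (F *m u + g) + quad Rc u =
  quad Q (F *m (u - us)) + quad Rc (u - us) + (quad Q (F *m us + g) + quad Rc us).
Proof.
move=> symQ symRc normal_eq.
rewrite -[u](subrK us) addrK; move: (u - us) => a.
have cross0 : (F *m a)^T *m Q *m (F *m us + g) + a^T *m Rc *m us = 0.
  have -> : (F *m a)^T *m Q *m (F *m us + g) + a^T *m Rc *m us =
      a^T *m ((Rc + F^T *m Q *m F) *m us + F^T *m Q *m g).
    by rewrite trmx_mul mulmxDr !mulmxDl !mulmxDr !mulmxA addrC addrA.
  by rewrite normal_eq addNr mulmx0.
move/(congr1 (fun M : 'M[R]_1 => M 0 0)): cross0.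
rewrite [(_ + _ : 'M[R]_1) 0 0]mxE [(0 : 'M[R]_1) 0 0]mxE => cross0.
rewrite mulmxDr -addrA [quad Q _]quadD // [quad Rc _]quadD //.
lra.
Qed.

End QuadraticCost.

Section OptimalCost.
Variables (R : realType) (T n m : nat).
Variables (As : nat -> 'M[R]_n) (Bs : nat -> 'M[R]_(n, m)).
Variables (Q : 'M[R]_(\sum_(t < T) n)) (Rc : 'M[R]_(\sum_(t < T) m)).
Hypotheses (symQ : Q^T = Q) (symRc : Rc^T = Rc).
Local Notation F := (Fmx T As Bs).
Local Notation G := (Gmx T As).
Hypothesis unitH : (Rc + F^T *m Q *m F) \in unitmx.

Definition Jstar w := quad Q (xstar As Bs Q Rc w) + quad Rc (ustar As Bs Q Rc w).

Lemma ustar_normal_eq w :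
  (Rc + F^T *m Q *m F) *m ustar As Bs Q Rc w = - (F^T *m Q *m (G *m w)).
Proof. by rewrite /ustar; set H := Rc + _; rewrite mulmxN -!mulmxA mulKVmx. Qed.

Lemma Jcost_split K w : causal K ->
  Jcost As Bs Q Rc K w = Dcost As Bs Q Rc K w + Jstar w.
Proof.
move=> causalK; rewrite /Jcost /Dcost /Jstar xcl_dynamics //.
rewrite (quad_cost_split _ symQ symRc (ustar_normal_eq w)) /xstar.
by rewrite [F *m ustar _ _ _ _ _ + _]addrC addrKA -mulmxBr.
Qed.

End OptimalCost.

Section SecondMoments.
Variables (R : realType) (N : nat) (d : measure_display) (Omega : measurableType d).
Variables (P : probability Omega R) (w : Omega -> 'cV[R]_N).
Hypothesis w_measurable : forall i, measurable_fun setT (fun om => w om i 0).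
Hypothesis w_square_integrable :
  forall i, P.-integrable setT (fun om => ((w om i 0) ^+ 2)%:E).

Lemma integrable_coord_mul a b :
  P.-integrable setT (fun om => (w om a 0 * w om b 0)%:E).
Proof.
apply: (@le_integrable _ _ _ P setT measurableT _
   (fun om => ((w om a 0) ^+ 2 + (w om b 0) ^+ 2)%:E)).
- by apply/measurable_EFinP; apply: measurable_funM.
- move=> om _; rewrite lee_fin; set x := w om a 0; set y := w om b 0.
  have sq_ge0 : (0 <= x ^+ 2 + y ^+ 2)%R by nra.
  by rewrite (ger0_norm sq_ge0) ler_norml; apply/andP; split; nra.
- apply: (eq_integrable measurableT _ _ _ (integrableD measurableT
    (w_square_integrable a) (w_square_integrable b))) => om _.
  by rewrite /= EFinD.
Qed.

Lemma integrable_quad_mulmx k (M : 'M[R]_k) (L : 'M[R]_(k, N)) :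
  P.-integrable setT (fun om => (quad M (L *m w om))%:E).
Proof.
set C := L^T *m M *m L.
have quad_sum om : quad M (L *m w om) =
    (\sum_b \sum_a C a b * (w om a 0 * w om b 0))%R.
  rewrite /quad.
  have -> : (L *m w om)^T *m M *m (L *m w om) = (w om)^T *m C *m w om.
    by rewrite /C trmx_mul !mulmxA.
  rewrite [LHS]mxE; apply: eq_bigr => b _; rewrite mxE mulr_suml; apply: eq_bigr => a _.
  by rewrite mxE mulrAC mulrC.
apply: (eq_integrable measurableT
  (fun om => (\sum_b \sum_a (C a b)%:E * (w om a 0 * w om b 0)%:E)%E)).
  move=> om _; rewrite quad_sum -sumEFin.
  by apply: eq_bigr => b _; rewrite -sumEFin.
apply: integrable_sum => // b _; apply: integrable_sum => // a _.
exact: integrableZl (integrable_coord_mul a b).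
Qed.

Lemma integrable_quad_mulmxD k1 k2 (M1 : 'M[R]_k1) (L1 : 'M[R]_(k1, N))
    (M2 : 'M[R]_k2) (L2 : 'M[R]_(k2, N)) :
  P.-integrable setT
    (fun om => (quad M1 (L1 *m w om) + quad M2 (L2 *m w om))%:E).
Proof.
apply: (eq_integrable measurableT _ _ _ (integrableD measurableT
  (integrable_quad_mulmx M1 L1) (integrable_quad_mulmx M2 L2))) => om _.
by rewrite /= EFinD.
Qed.

End SecondMoments.

Lemma argmin_causal_addr (R : realType) (T n m : nat)
    (f g : 'M[R]_(\sum_(t < T) m, \sum_(t < T) n) -> \bar R) (c : \bar R) :
  c \is a fin_num -> (forall K, causal K -> g K = f K + c)%E ->
  argmin_causal g = argmin_causal f.
Proof.
move=> c_fin gE; apply/seteqP; split => K [causalK K_min]; split => // K' causalK';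
  by have := K_min K' causalK'; rewrite !gE // leeD2rE.
Qed.

Section ExpectedCost.
Variables (R : realType) (T n m : nat).
Variables (As : nat -> 'M[R]_n) (Bs : nat -> 'M[R]_(n, m)).
Variables (Q : 'M[R]_(\sum_(t < T) n)) (Rc : 'M[R]_(\sum_(t < T) m)).
Hypotheses (Q_psd : psd Q) (Rc_pd : pd Rc).
Variables (d : measure_display) (Omega : measurableType d) (P : probability Omega R).
Variable w : Omega -> 'cV[R]_(\sum_(t < T) n).
Hypothesis w_measurable : forall i, measurable_fun setT (fun om => w om i 0).
Hypothesis w_square_integrable :
  forall i, P.-integrable setT (fun om => ((w om i 0) ^+ 2)%:E).
Local Notation F := (Fmx T As Bs).
Local Notation G := (Gmx T As).
Local Notation ustar_gain := (- (invmx (Rc + F^T *m Q *m F) *m F^T *m Q *m G)).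

Lemma integrable_Jstar :
  P.-integrable setT (fun om => (Jstar As Bs Q Rc (w om))%:E).
Proof.
apply: (eq_integrable measurableT _ _ _ (integrable_quad_mulmxD w_measurable
  w_square_integrable Q (F *m ustar_gain + G) Rc ustar_gain)) => om _.
by rewrite /Jstar /xstar /ustar mulmxDl -mulmxA mulNmx.
Qed.

Lemma integrable_Dcost K :
  P.-integrable setT (fun om => (Dcost As Bs Q Rc K (w om))%:E).
Proof.
set X := invmx (1%:M - F *m K) *m G.
apply: (eq_integrable measurableT _ _ _ (integrable_quad_mulmxD w_measurable
  w_square_integrable Q (X - (F *m ustar_gain + G)) Rc (K *m X - ustar_gain))).
move=> om _; rewrite /Dcost /xstar /ustar /ucl /xcl -/X.
by rewrite !(mulmxBl, mulmxDl, mulmxN, mulNmx) -!mulmxA.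
Qed.

Lemma expectation_Jcost_split K : causal K ->
  ('E_P[fun om => Jcost As Bs Q Rc K (w om)] =
   'E_P[fun om => Dcost As Bs Q Rc K (w om)] +
   'E_P[fun om => Jstar As Bs Q Rc (w om)])%E.
Proof.
move=> causalK; rewrite unlock -integralD //.
- apply: eq_integral => om _; rewrite -EFinD Jcost_split //.
  + exact: Q_psd.1.
  + exact: Rc_pd.1.
  + exact: unitmx_pd_add_psd.
- exact: integrable_Dcost.
- exact: integrable_Jstar.
Qed.

Lemma expectation_Jstar_fin_num :
  ('E_P[fun om => Jstar As Bs Q Rc (w om)] \is a fin_num)%E.
Proof. by rewrite unlock; apply: integrable_fin_num integrable_Jstar. Qed.

End ExpectedCost.

Theorem corollary4 (R : realType) (T n m : nat)
  (As : nat -> 'M[R]_n) (Bs : nat -> 'M[R]_(n, m))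
  (Q : 'M[R]_(\sum_(t < T) n)) (Rc : 'M[R]_(\sum_(t < T) m))
  (d : measure_display) (Omega : measurableType d) (P : probability Omega R)
  (w : Omega -> 'cV[R]_(\sum_(t < T) n)) :
  psd Q -> pd Rc ->
  (forall i, measurable_fun setT (fun om => w om i 0)) ->
  (forall i, P.-integrable setT (fun om => ((w om i 0) ^+ 2)%:E)) ->
  argmin_causal (fun K => 'E_P[fun om => Dcost As Bs Q Rc K (w om)])%E
  = argmin_causal (fun K => 'E_P[fun om => Jcost As Bs Q Rc K (w om)])%E.
Proof.
move=> Q_psd Rc_pd w_measurable w_square_integrable; apply/esym.
apply: argmin_causal_addr (expectation_Jstar_fin_num As Bs Q Rc w_measurable
  w_square_integrable) _ => K causalK.
exact: expectation_Jcost_split.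
Qed.
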